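(* A hypergraph $H$ is acyclic if and only if it is Vorob'ev regular.
   Context: A hypergraph $H=(V,E)$ has a finite vertex set $V$ and a set $E$ of nonempty subsets of $V$. Acyclicity: the reduction $R(H)$ keeps only hyperedges not properly contained in another; $H$ is reduced if $H=R(H)$. For $W\subseteq V$, $H[W]=(W,\{X\cap W:X\in E\}\setminus\{\emptyset\})$. For a reduced $H$ and distinct hyperedges $X,Y$ with $X\cap Y\neq\emptyset$, $X\cap Y$ is an articulation set if $R(H[V\setminus(X\cap Y)])$ has more connected components than $H$. A reduced $H$ is acyclic if for every $W\subseteq V$ such that $R(H[W])$ is connected with more than one hyperedge, $R(H[W])$ has an articulation set; an arbitrary $H$ is acyclic if $R(H)$ is (standard $\alpha$-acyclicity). Vorob'ev regularity: a complex is a hypergraph whose set of hyperedges is closed under taking subsets; the downward closure of $H$ is the complex whose hyperedges are all subsets of hyperedges of $H$. In a complex $\mathcal K$, a hyperedge is maximal if not a proper subset of another hyperedge. For distinct maximal hyperedges $X,Y$, $X$ yields a maximal intersection with $Y$ if there is no maximal hyperedge $Z\notin\{X,Y\}$ with $X\cap Y\subsetneq X\cap Z$. A maximal hyperedge $X$ is extreme if all maximal intersections of $X$ are equal. The proper vertices of an extreme $X$ are those belonging to no other maximal hyperedge; the normal subcomplex corresponding to $X$ consists of all hyperedges of $\mathcal K$ disjoint from the proper vertices of $X$. A normal series is a sequence $\mathcal K=\mathcal K_0\supset\mathcal K_1\supset\cdots\supset\mathcal K_r$ with each $\mathcal K_{\ell+1}$ a normal subcomplex of $\mathcal K_\ell$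 ($0\le\ell<r$) and $\mathcal K_r$ having no extreme hyperedge. $\mathcal K$ is regular if it has a normal series whose last term is the complex without vertices. $H$ is Vorob'ev regular if its downward closure is regular. *)

From mathcomp Require Import all_boot.
Set Implicit Arguments. Unset Strict Implicit. Unset Printing Implicit Defensive.

Section Hyper.
Variable T : finType.

Definition hypergraph (V : {set T}) (E : {set {set T}}) : bool :=
  [forall X in E, (X != set0) && (X \subset V)].

Definition red (E : {set {set T}}) : {set {set T}} :=
  [set X in E | [forall Y in E, ~~ (X \proper Y)]].

Definition reduced (E : {set {set T}}) : bool := red E == E.

Definition ind (W : {set T}) (E : {set {set T}}) : {set {set T}} :=
  [set X :&: W | X in E] :\ set0.

Definition adj (E : {set {set T}}) : rel T :=
  fun x y => [exists X in E, (x \in X) && (y \in X)].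

Definition comps (V : {set T}) (E : {set {set T}}) : {set {set T}} :=
  [set [set y in V | connect (adj E) x y] | x in V].

Definition ncomp (V : {set T}) (E : {set {set T}}) : nat := #|comps V E|.

Definition hconnected (V : {set T}) (E : {set {set T}}) : bool :=
  ncomp V E == 1.

Definition articulation (V : {set T}) (E : {set {set T}}) (X Y : {set T}) : bool :=
  [&& X \in E, Y \in E, X != Y, X :&: Y != set0 &
      ncomp V E < ncomp (V :\: (X :&: Y)) (red (ind (V :\: (X :&: Y)) E))].

Definition has_articulation (V : {set T}) (E : {set {set T}}) : bool :=
  [exists X, exists Y, articulation V E X Y].

Definition acyclic_reduced (V : {set T}) (E : {set {set T}}) : Prop :=
  forall W : {set T}, W \subset V ->
    hconnected W (red (ind W E)) -> 1 < #|red (ind W E)| ->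
    has_articulation W (red (ind W E)).

Definition acyclic (V : {set T}) (E : {set {set T}}) : Prop :=
  acyclic_reduced V (red E).

(* A complex is represented by its set of hyperedges K (nonempty sets,
   closed under nonempty subsets); its vertices are those in some hyperedge. *)
Definition is_complex (K : {set {set T}}) : bool :=
  [forall X in K, (X != set0) &&
     [forall Y : {set T}, ((Y != set0) && (Y \subset X)) ==> (Y \in K)]].

Definition down_closure (E : {set {set T}}) : {set {set T}} :=
  [set Y : {set T} | (Y != set0) && [exists X in E, Y \subset X]].

Definition maximal (K : {set {set T}}) (X : {set T}) : bool :=
  (X \in K) && [forall Y in K, ~~ (X \proper Y)].

Definition maxint (K : {set {set T}}) (X Y : {set T}) : bool :=
  [&& maximal K X, maximal K Y, X != Y &
      ~~ [exists Z, [&& maximal K Z, Z != X, Z != Y &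
                        (X :&: Y) \proper (X :&: Z)]]].

Definition extreme (K : {set {set T}}) (X : {set T}) : bool :=
  maximal K X &&
  [forall Y, forall Y', (maxint K X Y && maxint K X Y') ==>
                        (X :&: Y == X :&: Y')].

Definition proper_vertices (K : {set {set T}}) (X : {set T}) : {set T} :=
  [set v in X | [forall Y, (maximal K Y && (Y != X)) ==> (v \notin Y)]].

Definition normal_sub (K : {set {set T}}) (X : {set T}) : {set {set T}} :=
  [set Y in K | [disjoint Y & proper_vertices K X]].

Definition normal_step : rel {set {set T}} :=
  fun K K' => [exists X, extreme K X && (K' == normal_sub K X)].

Definition no_extreme (K : {set {set T}}) : bool := [forall X, ~~ extreme K X].

(* a normal series K = K_0 ⊃ K_1 ⊃ ... ⊃ K_r, given as K :: s *)
Definition normal_series (K : {set {set T}}) (s : seq {set {set T}}) : bool :=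
  path normal_step K s && no_extreme (last K s).

Definition regular (K : {set {set T}}) : Prop :=
  exists s : seq {set {set T}}, normal_series K s && (last K s == set0).

Definition vorobev_regular (E : {set {set T}}) : Prop :=
  regular (down_closure E).

End Hyper.

From mathcomp Require Import all_boot.
Set Implicit Arguments. Unset Strict Implicit. Unset Printing Implicit Defensive.

(* Both properties are invariant under reduction, so we work with the reduced
   hypergraph M = R(E): an antichain of nonempty hyperedges.  The bridge
   between them is ear reducibility (GYO reducibility): an ear of M is a
   hyperedge X together with a witness Y in M such that X meets every other
   hyperedge of M only inside Y, and M is ear reducible if ears can be
   removed one at a time until at most one hyperedge is left.
   1. In the downward closure of M, the extreme hyperedges are exactly the
      ears of M (or the only hyperedge), and the normal subcomplex of an ear
      X is the closure of M \ X; so normal series ending in the empty complex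
      are ear decompositions, and regularity is ear reducibility
      (ear_reducible_regular, regular_ear_reducible).
   2. Ear reducible => acyclic: the ears of every induced reduced
      subhypergraph with two hyperedges avoid any prescribed hyperedge, which
      is preserved by adding back an ear (ear_reducible_ears_avoid); and in a
      connected hypergraph an ear X with witness Y makes X :&: Y an
      articulation set (ear_articulation).
   3. Acyclic => ear reducible: by induction on the number of vertices, an
      articulation set S splits off a component C avoiding the prescribed
      hyperedge; an ear of the hypergraph induced on C u S lifts to an ear of
      the whole hypergraph that meets C (acyclic_ears_avoid).  Removing an ear
      of an acyclic hypergraph leaves an induced, hence acyclic, hypergraph
      (acyclic_ear_reducible). *)

Section Hypergraphs.
Variable T : finType.
Implicit Types (E M F H : {set {set T}}) (A B G S V W X Y Z : {set T}).

Definition antichain M := forall X Y, X \in M -> Y \in M -> X \subset Y -> X = Y.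
Definition nonempty_edges M := forall X, X \in M -> X != set0.

Definition ear M X :=
  X \in M /\ exists Y, [/\ Y \in M, Y != X &
                           forall Z, Z \in M -> Z != X -> X :&: Z \subset Y].

Lemma antichainD1 M X : antichain M -> antichain (M :\ X).
Proof. by move=> HA A B /setD1P[_ HAM] /setD1P[_ HB]; apply: HA. Qed.

Lemma nonempty_edgesD1 M X : nonempty_edges M -> nonempty_edges (M :\ X).
Proof. by move=> HN A /setD1P[_ H]; apply: HN. Qed.

Lemma card_le1_eq F X Y : #|F| <= 1 -> X \in F -> Y \in F -> X = Y.
Proof.
move=> H HX HY; apply/eqP; apply: contraLR H => ne; rewrite -ltnNge.
by apply/card_gt1P; exists X, Y.
Qed.

Lemma exists_other F X : 1 < #|F| -> exists2 Z, Z \in F & Z != X.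
Proof.
case/card_gt1P => Z1 [Z2 [HZ1 HZ2 ne]].
case: (eqVneq Z1 X) => [e|n]; last by exists Z1.
by exists Z2 => //; rewrite -e eq_sym.
Qed.

Lemma red_subE E X : X \in red E -> X \in E.
Proof. by rewrite inE => /andP[]. Qed.

Lemma red_max E X Y : X \in red E -> Y \in E -> X \subset Y -> X = Y.
Proof.
rewrite inE => /andP[_ /forallP H] HY XY.
by have := H Y; rewrite HY /= properEneq XY andbT negbK => /eqP.
Qed.

Lemma red_anti E : antichain (red E).
Proof. by move=> X Y HX HY; apply: red_max HX (red_subE HY). Qed.

Lemma red_cover E X : X \in E -> exists2 Y, Y \in red E & X \subset Y.
Proof.
move=> HX; have HP : (X \in E) && (X \subset X) by rewrite HX subxx.
case: (@arg_maxnP _ X (fun Y => (Y \in E) && (X \subset Y)) (fun Y => #|Y|) HP).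
move=> Y /andP[HYE XY] Hmax.
exists Y => //; rewrite inE HYE; apply/forallP => Z; apply/implyP => HZ.
apply/negP => YZ; have : #|Z| <= #|Y|.
  by apply: Hmax; rewrite HZ (subset_trans XY) // proper_sub.
by rewrite leqNgt proper_card.
Qed.

Lemma red_id M : antichain M -> red M = M.
Proof.
move=> HA; apply/setP => X; rewrite inE.
case HX: (X \in M) => //=; apply/forallP => Y; apply/implyP => HY.
rewrite properEneq negb_and negbK; case XY: (X \subset Y); last by rewrite orbT.
by rewrite (HA _ _ HX HY XY) eqxx.
Qed.

Lemma red_eq E E' : E' \subset E ->
  (forall X, X \in E -> exists2 Y, Y \in E' & X \subset Y) -> red E = red E'.
Proof.
move=> sub Hc; apply/setP => X; apply/idP/idP => HX.
- have [Y HY XY] := Hc _ (red_subE HX).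
  have eXY := red_max HX (subsetP sub _ HY) XY; subst Y.
  rewrite inE HY; apply/forallP => Z; apply/implyP => HZ; apply/negP => XZ.
  have e := red_max HX (subsetP sub _ HZ) (proper_sub XZ).
  by move: XZ; rewrite e properE subxx andbF.
- rewrite inE (subsetP sub _ (red_subE HX)); apply/forallP => Z.
  apply/implyP => HZ; apply/negP => XZ; have [Z' HZ' ZZ'] := Hc _ HZ.
  have e := red_max HX HZ' (subset_trans (proper_sub XZ) ZZ'); subst Z'.
  by move: XZ; rewrite properE ZZ' andbF.
Qed.

Lemma in_ind W E Y :
  reflect (Y != set0 /\ exists2 X, X \in E & Y = X :&: W) (Y \in ind W E).
Proof. by apply: (iffP setD1P) => -[H1 H2]; split => //; apply/imsetP. Qed.

Lemma ind_trace W E X : X \in E -> X :&: W != set0 -> X :&: W \in ind W E.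
Proof. by move=> HX H; apply/in_ind; split => //; exists X. Qed.

Lemma red_ind_elem W E Z :
  Z \in red (ind W E) -> Z != set0 /\ exists2 G, G \in E & Z = G :&: W.
Proof. by move=> /red_subE /in_ind. Qed.

Lemma red_ind_sub W E Z : Z \in red (ind W E) -> Z \subset W.
Proof. by case/red_ind_elem => _ [G _ ->]; rewrite subsetIr. Qed.

Lemma red_ind_red W E : red (ind W (red E)) = red (ind W E).
Proof.
symmetry; apply: red_eq.
- apply/subsetP => Y /in_ind [H1 [X HX eY]]; subst Y.
  exact: ind_trace (red_subE HX) H1.
- move=> Y /in_ind [H1 [X HX eY]]; have [X' HX' XX'] := red_cover HX.
  exists (X' :&: W); last by rewrite eY setSI.
  apply: ind_trace HX' _; apply: contraNneq H1 => e.
  by rewrite eY -subset0 -e setSI.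
Qed.

Lemma ind_ind W W0 E : W \subset W0 -> ind W (ind W0 E) = ind W E.
Proof.
move=> sW; apply/setP => Y; apply/in_ind/in_ind => -[H1 [X HX eY]]; split => //.
- case/in_ind: HX => _ [X0 HX0 eX]; exists X0 => //.
  by rewrite eY eX -setIA (setIidPr sW).
- exists (X :&: W0); last by rewrite eY -setIA (setIidPr sW).
  apply: ind_trace HX _; apply: contraNneq H1 => e.
  by rewrite eY -subset0 -e setIS.
Qed.

Lemma red_ind_comp W W0 E :
  W \subset W0 -> red (ind W (red (ind W0 E))) = red (ind W E).
Proof. by move=> sW; rewrite red_ind_red ind_ind. Qed.

Lemma ind_id W M :
  (forall G, G \in M -> G \subset W) -> nonempty_edges M -> ind W M = M.
Proof.
move=> Hs Hn; apply/setP => Z; apply/in_ind/idP => [[_ [G HG ->]]|HZ].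
  by rewrite (setIidPl (Hs _ HG)).
by split; [exact: Hn | exists Z => //; rewrite (setIidPl (Hs _ HZ))].
Qed.

Lemma in_down M Y :
  reflect (Y != set0 /\ exists2 X, X \in M & Y \subset X) (Y \in down_closure M).
Proof.
rewrite inE; apply: (iffP andP) => -[H1 H2]; split => //.
- by case/existsP: H2 => X /andP[]; exists X.
- by case: H2 => X HX HY; apply/existsP; exists X; rewrite HX.
Qed.

Lemma down_red E : down_closure (red E) = down_closure E.
Proof.
apply/setP => Y; apply/in_down/in_down => -[H1 [X HX HY]]; split => //.
- by exists X => //; exact: red_subE HX.
- have [X' HX' XX'] := red_cover HX; exists X' => //; exact: subset_trans XX'.
Qed.

Lemma down0 : down_closure (set0 : {set {set T}}) = set0.
Proof. by apply/setP => Y; apply/in_down; rewrite inE => -[_ [X]]; rewrite inE. Qed.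

Section Closure.
Variable M : {set {set T}}.
Hypotheses (HA : antichain M) (HN : nonempty_edges M).

Lemma maximal_down X : maximal (down_closure M) X = (X \in M).
Proof.
apply/idP/idP.
- case/andP => /in_down [_ [G HG XG]] /forallP /(_ G).
  have -> : G \in down_closure M by apply/in_down; split; [apply: HN | exists G].
  by rewrite properEneq XG andbT negbK => /eqP ->.
- move=> HX; rewrite /maximal; apply/andP; split.
    by apply/in_down; split; [apply: HN | exists X].
  apply/forallP => Y; apply/implyP => /in_down [_ [G HG YG]]; apply/negP => XY.
  have e := HA HX HG (subset_trans (proper_sub XY) YG); subst G.
  by move: XY; rewrite properE YG andbF.
Qed.

Lemma ear_extreme X : ear M X -> extreme (down_closure M) X.
Proof.
move=> [HX [Y [HY YX HE]]].
have key Z : maxint (down_closure M) X Z -> X :&: Z = X :&: Y.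
  move=> /and4P[_ HZ ZX /negP Hno]; rewrite maximal_down in HZ.
  have sub : X :&: Z \subset X :&: Y.
    by rewrite subsetI subsetIl HE // eq_sym.
  case: (eqVneq (X :&: Z) (X :&: Y)) => // ne; case: Hno; apply/existsP.
  exists Y; rewrite maximal_down HY YX properEneq ne sub !andbT /=.
  by apply: contraNneq ne => ->.
rewrite /extreme maximal_down HX /=; apply/forallP => Z; apply/forallP => Z'.
by apply/implyP => /andP[/key -> /key ->].
Qed.

Lemma normal_ear X : ear M X -> normal_sub (down_closure M) X = down_closure (M :\ X).
Proof.
move=> [HX [W [HW WX HE]]].
apply/setP => Y; rewrite inE; apply/andP/in_down.
- move=> [/in_down [H1 [G HG YG]] Hd]; split => //.
  case: (eqVneq G X) => [eGX|nGX]; last by exists G => //; rewrite !inE nGX.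
  subst G; exists W; first by rewrite !inE WX.
  apply/subsetP => v Hv; have := negbT (disjointFr Hd Hv).
  rewrite inE (subsetP YG _ Hv) /= => /forallPn [Z].
  rewrite negb_imply negbK maximal_down => /andP[/andP[HZ ZX] vZ].
  by apply: (subsetP (HE _ HZ ZX)); rewrite inE (subsetP YG _ Hv).
- move=> [H1 [G /setD1P[GX HG] YG]]; split.
    by apply/in_down; split => //; exists G.
  rewrite disjoints_subset; apply/subsetP => v vY; rewrite !inE negb_and.
  apply/orP; right; apply/forallPn; exists G.
  by rewrite negb_imply negbK maximal_down HG GX (subsetP YG).
Qed.

Lemma extreme_ear X : extreme (down_closure M) X ->
  X \in M /\ (M = [set X] \/ ear M X).
Proof.
move=> /andP[HX Hext]; rewrite maximal_down in HX; split => //.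
case: (boolP [exists Y, (Y \in M) && (Y != X)]) => [/existsP [Y0 /andP[HY0 Y0X]]|Hn].
  right.
  have star Z : Z \in M -> Z != X -> exists Zs,
      X :&: Z \subset X :&: Zs /\ maxint (down_closure M) X Zs.
    move=> HZ ZX.
    pose Q Z' := [&& Z' \in M, Z' != X & X :&: Z \subset X :&: Z'].
    have QZ : Q Z by rewrite /Q HZ ZX subxx.
    case: (@arg_maxnP _ Z Q (fun Z' => #|X :&: Z'|) QZ) => Zs /and3P[HZs ZsX sub] Hmax.
    exists Zs; split => //; rewrite /maxint !maximal_down HX HZs eq_sym ZsX /=.
    apply/negP => /existsP [Z'' /and4P[HZ'' Z''X _ pr]].
    rewrite maximal_down in HZ''.
    have : #|X :&: Z''| <= #|X :&: Zs|.
      by apply: Hmax; rewrite /Q HZ'' Z''X (subset_trans sub) // proper_sub.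
    by rewrite leqNgt proper_card.
  have [Y [_ HmY]] := star _ HY0 Y0X.
  have /and4P[_ HY YX _] := HmY; rewrite maximal_down in HY.
  split => //; exists Y; split => //; first by rewrite eq_sym.
  move=> Z HZ ZX; have [Zs [sub HmZ]] := star _ HZ ZX.
  have := forallP (forallP Hext Zs) Y; rewrite HmZ HmY /= => /eqP e.
  by apply: (subset_trans sub); rewrite e subsetIr.
left; apply/setP => Y; rewrite inE; apply/idP/eqP => [HY|->//].
by apply/eqP; apply: contraR Hn => YX; apply/existsP; exists Y; rewrite HY.
Qed.

End Closure.

Lemma single_extreme X : X != set0 -> extreme (down_closure [set X]) X.
Proof.
move=> HX; have HA : antichain [set X] by move=> A B /set1P -> /set1P ->.
have HN : nonempty_edges [set X] by move=> A /set1P ->.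
rewrite /extreme maximal_down // set11; apply/forallP => Z; apply/forallP => Z'.
apply/implyP => /andP[/and4P[_ HZ ZX _] _]; rewrite maximal_down // in HZ.
by move/set1P: HZ ZX => ->; rewrite eqxx.
Qed.

Lemma normal_single X : X != set0 -> normal_sub (down_closure [set X]) X = set0.
Proof.
move=> HX; have HA : antichain [set X] by move=> A B /set1P -> /set1P ->.
have HN : nonempty_edges [set X] by move=> A /set1P ->.
apply/setP => Y; rewrite inE [RHS]inE; apply/negP => /andP[/in_down [H1 [G /set1P eG YG]] Hd].
subst G; have [v vY] := set0Pn _ H1; have := negbT (disjointFr Hd vY).
rewrite inE (subsetP YG _ vY) /= => /forallPn [Z].
by rewrite negb_imply negbK maximal_down // => /andP[/andP[/set1P -> ]]; rewrite eqxx.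
Qed.

Inductive ear_reducible : {set {set T}} -> Prop :=
| ear_reducible0 : ear_reducible set0
| ear_reducible1 X : ear_reducible [set X]
| ear_reducibleS M X : ear M X -> ear_reducible (M :\ X) -> ear_reducible M.

Lemma no_extreme_set0 : no_extreme (set0 : {set {set T}}).
Proof. by apply/forallP => X; apply/negP => /andP[/andP[]]; rewrite inE. Qed.

Lemma ear_reducible_regular M :
  antichain M -> nonempty_edges M -> ear_reducible M -> regular (down_closure M).
Proof.
move=> HA HN H; elim: H HA HN => {M} [|X|M X Hear _ IH] HA HN.
- by exists [::]; rewrite /normal_series /= down0 eqxx no_extreme_set0.
- have HX : X != set0 by apply: HN; rewrite set11.
  exists [:: set0]; rewrite /normal_series /= eqxx no_extreme_set0 !andbT.
  by apply/existsP; exists X; rewrite single_extreme //= normal_single.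
- have [s /andP[/andP[Hp Hne] Hl]] := IH (antichainD1 (X:=X) HA) (nonempty_edgesD1 (X:=X) HN).
  exists (down_closure (M :\ X) :: s); rewrite /normal_series /= Hp Hne Hl !andbT.
  by apply/existsP; exists X; rewrite ear_extreme //= normal_ear.
Qed.

Lemma regular_ear_reducible (s : seq {set {set T}}) M :
  antichain M -> nonempty_edges M -> path (@normal_step T) (down_closure M) s ->
  last (down_closure M) s == set0 -> ear_reducible M.
Proof.
elim: s M => [|K s IH] M HA HN /=.
- move=> _ /eqP e; suff -> : M = set0 by exact: ear_reducible0.
  apply/setP => X; rewrite inE; apply/negP => HX.
  have : X \in down_closure M by apply/in_down; split; [apply: HN | exists X].
  by rewrite e inE.
- case/andP => /existsP [X /andP[Hex /eqP eK]] Hp Hl.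
  have [HX [->|Hear]] := extreme_ear HA HN Hex; first exact: ear_reducible1.
  apply: (ear_reducibleS Hear).
  apply: IH (antichainD1 (X:=X) HA) (nonempty_edgesD1 (X:=X) HN) _ _;
  by rewrite -normal_ear // -eK.
Qed.

Definition ears_avoid F := forall A, A \in F -> exists X, [/\ X \in F, X != A & ear F X].

Lemma ears_avoid_pair F (E1 E2 : {set T}) : E1 \in F -> E2 \in F -> E1 != E2 ->
  (forall Z, Z \in F -> Z = E1 \/ Z = E2) -> ears_avoid F.
Proof.
move=> H1 H2 ne HF.
have earF X1 X2 : X1 \in F -> X2 \in F -> X2 != X1 ->
    (forall Z, Z \in F -> Z = X1 \/ Z = X2) -> ear F X1.
  move=> HX1 HX2 ne' HF'; split => //; exists X2; split => // Z HZ ZX1.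
  by case: (HF' _ HZ) => e; [rewrite e eqxx in ZX1 | rewrite e subsetIr].
have HF' Z : Z \in F -> Z = E2 \/ Z = E1 by case/HF; [right | left].
move=> A HA; case: (eqVneq E1 A) => [eA|nA].
  by exists E2; rewrite -eA eq_sym ne; split => //; apply: (earF _ E1).
by exists E1; split => //; apply: (earF _ E2) => //; rewrite eq_sym.
Qed.

Lemma red_sub E E' Z : E' \subset E -> Z \in E' -> Z \in red E -> Z \in red E'.
Proof.
move=> sub HZ; rewrite !inE HZ => /andP[_ /forallP Hm]; apply/forallP => Y.
by apply/implyP => HY; apply: (implyP (Hm Y)); exact: subsetP sub _ HY.
Qed.

Lemma ind_setD1_sub W M X : ind W (M :\ X) \subset ind W M.
Proof.
apply/subsetP => Z /in_ind [H1 [G /setD1P[_ HG] eZ]]; subst Z.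
exact: ind_trace HG H1.
Qed.

(* We show
   that the property "ears avoid every hyperedge" passes from F' to F. *)
Section InducedEar.
Variables (M : {set {set T}}) (X Y W : {set T}).
Hypotheses (HX : X \in M) (HY : Y \in M) (YX : Y != X)
  (HE : forall Z, Z \in M -> Z != X -> X :&: Z \subset Y).
Local Notation F := (red (ind W M)).
Local Notation F' := (red (ind W (M :\ X))).
Local Notation X' := (X :&: W).
Local Notation J := (Y :&: W).

Lemma red_ind_absorbed :
  (X' == set0) || [exists G in M :\ X, X' \subset G :&: W] -> F = F'.
Proof.
move=> Habs; apply: red_eq; first exact: ind_setD1_sub.
move=> Z /in_ind [H1 [G HG eZ]]; subst Z.
case: (eqVneq G X) => [eGX|nGX]; last first.
  by exists (G :&: W) => //; apply: ind_trace H1; rewrite !inE nGX.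
subst G; case/orP: Habs => [/eqP e|/exists_inP [G' HG' sub]].
  by rewrite e eqxx in H1.
exists (G' :&: W) => //; apply: ind_trace HG' _.
by apply: contraNneq H1 => e; rewrite -subset0 -e.
Qed.

Hypotheses (X'n0 : X' != set0)
  (Hna : forall G, G \in M :\ X -> ~~ (X' \subset G :&: W)).

Lemma trace_in : X' \in F.
Proof.
rewrite inE ind_trace //=; apply/forallP => Z; apply/implyP.
case/in_ind => _ [G HG eZ]; subst Z; apply/negP => pr.
case: (eqVneq G X) => [eGX|nGX].
  by subst G; move: pr; rewrite properE subxx andbF.
have HGM : G \in M :\ X by rewrite !inE nGX HG.
by move: (Hna HGM); rewrite (proper_sub pr).
Qed.

Lemma trace_notin : X' \notin F'.
Proof. by apply/negP => /red_ind_elem [_ [G HG eX]]; move: (Hna HG); rewrite -eX subxx. Qed.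

Lemma red_ind_drop Z : Z \in F -> Z != X' -> Z \in F'.
Proof.
move=> HZ ZX'; apply: (red_sub (ind_setD1_sub _ _ _) _ HZ).
case/red_ind_elem: HZ => H1 [G HG eZ]; rewrite eZ; apply: ind_trace; last by rewrite -eZ.
by rewrite !inE HG andbT; apply: contraNneq ZX' => e; rewrite eZ e.
Qed.

Lemma red_ind_keep Z : Z \in F' -> ~~ (Z \subset X') -> Z \in F.
Proof.
move=> HZ ZX'; rewrite inE (subsetP (ind_setD1_sub _ _ _) _ (red_subE HZ)) /=.
apply/forallP => Z2; apply/implyP => /in_ind [H2 [G HG eZ2]]; apply/negP => pr.
case: (eqVneq G X) => [eGX|nGX].
  by subst G; move: ZX'; rewrite -eZ2 (proper_sub pr).
have HZ2 : Z2 \in ind W (M :\ X) by rewrite eZ2 ind_trace ?inE ?nGX // -eZ2.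
have e := red_max HZ HZ2 (proper_sub pr).
by move: pr; rewrite e properE subxx andbF.
Qed.

Lemma trace_meet Z : Z \in F' -> X' :&: Z \subset J.
Proof.
case/red_ind_elem => _ [G /setD1P[GX HG] ->].
by rewrite setIACA setIid setSI // HE.
Qed.

Lemma witness_cover : 1 < #|F| -> exists2 B, B \in F' & J \subset B.
Proof.
move=> HF; case: (eqVneq J set0) => [J0|Jn0].
  have [Z HZ ZX'] := exists_other X' HF.
  by exists Z; [apply: red_ind_drop | rewrite J0 sub0set].
have HJ : J \in ind W (M :\ X) by apply: ind_trace Jn0; rewrite !inE YX.
by have [B HB JB] := red_cover HJ; exists B.
Qed.

(* when F' has at most one hyperedge, F has exactly two *)
Lemma ears_avoid_small : 1 < #|F| -> #|F'| <= 1 -> ears_avoid F.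
Proof.
move=> HF HF'; have [Z0 HZ0 Z0X'] := exists_other X' HF.
apply: (ears_avoid_pair trace_in HZ0); first by rewrite eq_sym.
move=> Z HZ; case: (eqVneq Z X') => [|ZX']; first by left.
by right; apply: card_le1_eq HF' (red_ind_drop HZ ZX') (red_ind_drop HZ0 Z0X').
Qed.

Variable B : {set T}.
Hypotheses (HB : B \in F') (JB : J \subset B).

Lemma sub_trace_eq Z : Z \in F' -> Z \subset X' -> Z = B.
Proof.
move=> HZ ZX'; have := trace_meet HZ; rewrite (setIidPr ZX') => ZJ.
exact: red_anti HZ HB (subset_trans ZJ JB).
Qed.

Lemma ear_lift (E1 : {set T}) : E1 \in F' -> E1 != B -> ear F' E1 -> E1 \in F /\ ear F E1.
Proof.
move=> HE1 E1B [_ [Z1 [HZ1 Z1E1 HE1e]]].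
have E1F : E1 \in F.
  by apply: red_ind_keep => //; apply: contra E1B => /(sub_trace_eq HE1) ->.
split => //; split => //.
have E1X' : E1 != X' by apply: contraNneq trace_notin => <-.
case: (boolP (Z1 \subset X')) => Z1X'.
- exists X'; split; [exact: trace_in | by rewrite eq_sym |].
  move=> Z HZ ZE1; case: (eqVneq Z X') => [->|ZX']; first exact: subsetIr.
  exact: subset_trans (HE1e _ (red_ind_drop HZ ZX') ZE1) Z1X'.
- exists Z1; split => //; first exact: red_ind_keep.
  move=> Z HZ ZE1; case: (eqVneq Z X') => [eZ|ZX']; last first.
    exact: HE1e _ (red_ind_drop HZ ZX') ZE1.
  subst Z; apply: subset_trans (HE1e _ HB _); last by rewrite eq_sym.
  by rewrite subsetI subsetIl /= setIC (subset_trans (trace_meet HE1) JB).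
Qed.

Lemma ear_trace_swallow : B \subset X' -> ear F' B -> ear F X'.
Proof.
move=> BX' [_ [Z2 [HZ2 Z2B HZ2e]]]; split; first exact: trace_in.
exists Z2; split.
- by apply: red_ind_keep => //; apply: contra Z2B => /(sub_trace_eq HZ2) ->.
- by apply: contraNneq trace_notin => <-.
- move=> Z HZ ZX'; have HZ' := red_ind_drop HZ ZX'.
  have ZB : Z != B.
    apply: contraNneq ZX' => eZ; subst Z.
    apply/eqP; exact: red_max HZ (red_subE trace_in) BX'.
  apply: subset_trans (HZ2e _ HZ' ZB).
  by rewrite subsetI subsetIr andbT (subset_trans (trace_meet HZ') JB).
Qed.

Lemma ear_trace : ~~ (B \subset X') -> ear F X'.
Proof.
move=> BX'; split; first exact: trace_in.
exists B; split; first exact: red_ind_keep.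
- by apply: contraNneq trace_notin => <-.
- move=> Z HZ ZX'; exact: subset_trans (trace_meet (red_ind_drop HZ ZX')) JB.
Qed.

Lemma ears_avoid_large : ears_avoid F' -> ears_avoid F.
Proof.
move=> IH A HA; have [E1 [HE1 E1B earE1]] := IH _ HB.
have [E1F earF1] := ear_lift HE1 E1B earE1.
case: (eqVneq E1 A) => [eA|nA]; last by exists E1.
subst A; case: (boolP (B \subset X')) => BX'.
- have [E2 [HE2 E2E1 earE2]] := IH _ HE1.
  case: (eqVneq E2 B) => [eB|nB]; last first.
    by have [E2F earF2] := ear_lift HE2 nB earE2; exists E2.
  subst E2; exists X'; split; [exact: trace_in | | exact: ear_trace_swallow].
  by apply: contraNneq trace_notin => ->.
- exists X'; split; [exact: trace_in | | exact: ear_trace].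
  by apply: contraNneq trace_notin => ->.
Qed.

End InducedEar.

Lemma ear_reducible_ears_avoid M : ear_reducible M ->
  forall W, 1 < #|red (ind W M)| -> ears_avoid (red (ind W M)).
Proof.
elim => {M} [|X|M X [HX [Y [HY YX HE]]] _ IH] W HF.
- suff : red (ind W set0) = set0 by move=> e; rewrite e cards0 in HF.
  apply/setP => Z; rewrite in_set0; apply/negP.
  by case/red_ind_elem => _ [G]; rewrite in_set0.
- exfalso; move: HF; apply/negP; rewrite -leqNgt.
  suff /subset_leq_card : red (ind W [set X]) \subset [set X :&: W] by rewrite cards1.
  by apply/subsetP => Z /red_ind_elem [_ [G /set1P -> ->]]; rewrite set11.
case: (boolP ((X :&: W == set0) || [exists G in M :\ X, X :&: W \subset G :&: W])).
  by move=> Habs; rewrite (red_ind_absorbed Habs) in HF *; apply: IH.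
rewrite negb_or => /andP[X'n0 /exists_inPn Hna].
have [B HB JB] := witness_cover HY YX HF.
case: (leqP #|red (ind W (M :\ X))| 1) => HF'.
  exact: ears_avoid_small HX X'n0 Hna HF HF'.
by apply: (ears_avoid_large HX HE X'n0 Hna HB JB); apply: IH.
Qed.

Lemma adjP E x y :
  reflect (exists2 D, D \in E & (x \in D) && (y \in D)) (adj E x y).
Proof.
by apply: (iffP exists_inP) => [[D HD xyD]|[D HD xyD]]; exists D.
Qed.

Lemma adj_csym E : connect_sym (adj E).
Proof.
apply: sym_connect_sym => x y.
by apply/adjP/adjP => -[D HD /andP[xD yD]]; exists D; rewrite ?xD ?yD.
Qed.

Lemma connect_closed E A :
  (forall x y, x \in A -> adj E x y -> y \in A) ->
  forall x y, x \in A -> connect (adj E) x y -> y \in A.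
Proof.
move=> H x y xA /connectP [p Hp ->]; elim: p x xA Hp => //= z p IH x xA /andP[xz Hp].
exact: IH (H _ _ xA xz) Hp.
Qed.

Lemma ncomp_gt1 V E x1 x2 :
  x1 \in V -> x2 \in V -> ~~ connect (adj E) x1 x2 -> 1 < ncomp V E.
Proof.
move=> H1 H2 nc; apply/card_gt1P.
exists [set y in V | connect (adj E) x1 y], [set y in V | connect (adj E) x2 y].
split; [by apply/imsetP; exists x1 | by apply/imsetP; exists x2 |].
apply/eqP => /setP /(_ x2); rewrite !inE H2 connect0 /= => e.
by move: nc; rewrite e.
Qed.

Lemma ncomp_gt1_inv V E :
  1 < ncomp V E -> exists x1 x2, [/\ x1 \in V, x2 \in V & ~~ connect (adj E) x1 x2].
Proof.
case/card_gt1P => C1 [C2 [/imsetP [x1 Hx1 ->] /imsetP [x2 Hx2 ->] ne]].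
exists x1, x2; split => //; apply: contra ne => Hc; apply/eqP/setP => y.
rewrite !inE; case: (y \in V) => //=; apply/idP/idP => H.
- by apply: connect_trans H; rewrite adj_csym.
- exact: connect_trans Hc H.
Qed.

Lemma closed_disconnected V E A x1 x2 :
  (forall x y, x \in A -> adj E x y -> y \in A) ->
  x1 \in V -> x1 \in A -> x2 \in V -> x2 \notin A -> 1 < ncomp V E.
Proof.
move=> HA H1 x1A H2 x2A; apply: (ncomp_gt1 H1 H2).
by apply: contra x2A; apply: connect_closed.
Qed.

Section EarArticulation.
Variables (W : {set T}) (F : {set {set T}}).
Hypotheses (Fanti : antichain F) (Fne : nonempty_edges F)
  (Fsub : forall G, G \in F -> G \subset W).
Variables (X Z : {set T}).
Hypotheses (HX : X \in F) (HZ : Z \in F) (ZX : Z != X)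
  (HE : forall G, G \in F -> G != X -> X :&: G \subset Z).

(* an ear disjoint from its witness is a component on its own *)
Lemma ear_disjoint_disconnected : 1 < #|F| -> X :&: Z = set0 -> 1 < ncomp W F.
Proof.
move=> Hcard S0; have [G HG GX] := exists_other X Hcard.
have [x1 x1X] := set0Pn _ (Fne HX).
have /subsetPn [x2 x2G x2X] : ~~ (G \subset X).
  by apply: contra GX => /(Fanti HG HX) ->.
apply: (closed_disconnected (A := X) _ (subsetP (Fsub HX) _ x1X) x1X
          (subsetP (Fsub HG) _ x2G) x2X).
move=> x y xX /adjP [D HD /andP[xD yD]]; case: (eqVneq D X) => [<- //|DX].
have : x \in X :&: Z by rewrite inE xX (subsetP (HE HD DX)) // inE xX xD.
by rewrite S0 inE.
Qed.

(* removing the intersection with the witness separates X from Z *)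
Lemma ear_separates :
  1 < ncomp (W :\: (X :&: Z)) (red (ind (W :\: (X :&: Z)) F)).
Proof.
have /subsetPn [x1 x1X x1Z] : ~~ (X \subset Z).
  by apply: contra ZX => /(Fanti HX HZ) ->.
have /subsetPn [x2 x2Z x2X] : ~~ (Z \subset X).
  by apply: contra ZX => /(Fanti HZ HX) ->.
apply: (closed_disconnected (A := X :\: (X :&: Z)) (x1 := x1) (x2 := x2)).
- move=> x y /setDP [xX xS] /adjP [D /red_ind_elem [_ [G HG eD]] /andP[xD yD]].
  subst D; move: xD yD; rewrite !inE => /andP[xG _] /and3P[yG yS yW].
  case: (eqVneq G X) => [eGX|GX]; first by subst G; rewrite yS yG.
  by move: xS; rewrite inE xX (subsetP (HE HG GX)) // inE xX xG.
- by rewrite !inE (negbTE x1Z) andbF (subsetP (Fsub HX)).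
- by rewrite !inE (negbTE x1Z) andbF x1X.
- by rewrite !inE (negbTE x2X) (subsetP (Fsub HZ)).
- by rewrite !inE (negbTE x2X) andbF.
Qed.

Lemma ear_articulation : hconnected W F -> 1 < #|F| -> has_articulation W F.
Proof.
move=> /eqP Hc Hcard; apply/existsP; exists X; apply/existsP; exists Z.
rewrite /articulation HX HZ eq_sym ZX Hc ear_separates /= andbT.
apply/eqP => S0; have := ear_disjoint_disconnected Hcard S0.
by rewrite Hc.
Qed.

End EarArticulation.

Lemma ear_reducible_acyclic V M : ear_reducible M -> acyclic_reduced V M.
Proof.
move=> Hg W _ Hc Hcard; have [A [_ [HA _ _]]] := card_gt1P Hcard.
have [X [HX _ [_ [Z [HZ ZX HE]]]]] := ear_reducible_ears_avoid Hg Hcard HA.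
apply: (ear_articulation (@red_anti _) _ _ HX HZ ZX HE) => //.
- by move=> G /red_ind_elem [].
- by move=> G /red_ind_sub.
Qed.

Definition component W S (H : {set {set T}}) (x : T) : {set T} :=
  [set y in W :\: S | connect (adj (red (ind (W :\: S) H))) x y].

Section Component.
Variables (W S : {set T}) (H : {set {set T}}).
Hypothesis Hsub : forall G, G \in H -> G \subset W.

Lemma component_adj G u v : G \in H -> u \in G -> v \in G -> u \notin S -> v \notin S ->
  adj (red (ind (W :\: S) H)) u v.
Proof.
move=> HG uG vG uS vS; have inW := subsetP (Hsub HG).
have Gi : G :&: (W :\: S) \in ind (W :\: S) H.
  by apply: ind_trace HG _; apply/set0Pn; exists u; rewrite !inE uG uS inW.
have [D HD GD] := red_cover Gi; apply/adjP; exists D => //.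
by rewrite !(subsetP GD) // !inE ?uG ?vG ?uS ?vS ?inW.
Qed.

Lemma component_closed x G g v : G \in H -> g \in component W S H x ->
  g \in G -> v \in G -> v \notin S -> v \in component W S H x.
Proof.
move=> HG; rewrite !inE => /andP[/andP[gS gW] cg] gG vG vS.
rewrite vS (subsetP (Hsub HG) _ vG) /=.
exact: connect_trans cg (connect1 (component_adj HG gG vG gS vS)).
Qed.

Lemma component_edge x G g : G \in H -> g \in G -> g \in component W S H x ->
  G \subset component W S H x :|: S.
Proof.
move=> HG gG gC; apply/subsetP => v vG; rewrite inE.
case: (boolP (v \in S)) => vS; first by rewrite orbT.
by rewrite (component_closed HG gC gG vG vS).
Qed.

Lemma component_avoid A : A \in H -> 1 < ncomp (W :\: S) (red (ind (W :\: S) H)) ->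
  exists c d, [/\ c \in W :\: S, d \in W :\: S, d \notin component W S H c &
                  [disjoint A & component W S H c]].
Proof.
move=> HA /ncomp_gt1_inv [x1 [x2 [H1 H2 nc]]].
case: (boolP [disjoint A & component W S H x1]) => Hd.
  by exists x1, x2; split => //; rewrite inE H2.
exists x2, x1; split => //; first by rewrite inE H1 /= adj_csym.
case/pred0Pn: Hd => a1 /andP[a1A a1c] /=.
rewrite disjoint_sym; apply/pred0P => a /=; apply/negP => /andP[ac aA].
have aS : a \notin S by move: ac; rewrite !inE => /andP[/andP[]].
have := component_closed HA a1c a1A aA aS; rewrite inE => /andP[_ c1].
move: ac; rewrite inE => /andP[_ c2]; move: nc; apply/negP; rewrite negbK.
by apply: connect_trans c1 _; rewrite adj_csym.
Qed.

Lemma component_proper x d : S \subset W -> d \in W :\: S ->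
  d \notin component W S H x -> component W S H x :|: S \proper W.
Proof.
move=> SW Hd dC; rewrite properE subUset SW andbT; apply/andP; split.
  by apply/subsetP => y; rewrite !inE => /andP[/andP[]].
by apply/subsetPn; exists d; [case/setDP: Hd | rewrite inE negb_or dC; case/setDP: Hd].
Qed.

End Component.

Section ComponentEar.
Variables (W S : {set T}) (H : {set {set T}}).
Hypotheses (Hanti : antichain H) (Hsub : forall G, G \in H -> G \subset W)
  (Hcov : forall w, w \in W -> exists2 G, G \in H & w \in G).
Variables (X Y : {set T}) (c : T).
Hypotheses (HX : X \in H) (HY : Y \in H) (XY : X != Y)
  (SX : S \subset X) (SY : S \subset Y) (Hc : c \in W :\: S).
Local Notation C := (component W S H c).
Local Notation W' := (C :|: S).
Local Notation H' := (red (ind W' H)).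

Lemma c_in_component : c \in C.
Proof. by rewrite inE Hc connect0. Qed.

Lemma component_edge_ind G g : G \in H -> g \in G -> g \in C -> G \in ind W' H.
Proof.
move=> HG gG gC; have GW' := component_edge Hsub HG gG gC.
have eG : G :&: W' = G := setIidPl GW'.
by rewrite -eG; apply: ind_trace HG _; rewrite eG; apply/set0Pn; exists g.
Qed.

Lemma component_cover w : w \in W' -> exists2 G, G \in H' & w \in G.
Proof.
rewrite inE => /orP[wC|wS].
- have wW : w \in W by move: wC; rewrite !inE => /andP[/andP[]].
  have [G HG wG] := Hcov wW.
  have [D HD GD] := red_cover (component_edge_ind HG wG wC).
  by exists D => //; apply: (subsetP GD).
- have XW' : X :&: W' \in ind W' H.
    by apply: ind_trace HX _; apply/set0Pn; exists w; rewrite !inE (subsetP SX) ?wS ?orbT.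
  have [D HD XD] := red_cover XW'; exists D => //; apply: (subsetP XD).
  by rewrite !inE (subsetP SX) ?wS ?orbT.
Qed.

Lemma component_ear_single : #|H'| <= 1 ->
  exists G g, [/\ G \in H, g \in G, g \in C & ear H G].
Proof.
move=> H'1; have cW : c \in W by move: Hc; rewrite inE => /andP[].
have [G0 HG0 cG0] := Hcov cW; exists G0, c; split => //; first exact: c_in_component.
have uniq G g : G \in H -> g \in G -> g \in C -> G = G0.
  move=> HG gG gC.
  have [D HD GD] := red_cover (component_edge_ind HG gG gC).
  have [D0 HD0 G0D0] := red_cover (component_edge_ind HG0 cG0 c_in_component).
  have eD := card_le1_eq H'1 HD HD0; subst D0.
  case/red_ind_elem: HD => _ [G1 HG1 eD].
  have sub1 (K : {set T}) : K \subset D -> K \subset G1.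
    by move=> KD; rewrite (subset_trans KD) // eD subsetIl.
  by rewrite (Hanti HG HG1 (sub1 _ GD)) (Hanti HG0 HG1 (sub1 _ G0D0)).
split => //.
have [W0 [HW0 W0G0 SW0]] : exists W0, [/\ W0 \in H, W0 != G0 & S \subset W0].
  case: (eqVneq X G0) => [eX|nX]; last by exists X.
  by exists Y; split => //; rewrite -eX eq_sym.
exists W0; split => // Z HZ ZG0; apply/subsetP => v; rewrite inE => /andP[vG0 vZ].
have := subsetP (component_edge Hsub HG0 cG0 c_in_component) _ vG0.
rewrite inE => /orP[vC|vS]; last exact: (subsetP SW0).
by move: ZG0; rewrite (uniq _ _ HZ vZ vC) eqxx.
Qed.

Lemma separator_edge : 1 < #|H'| -> exists2 B, B \in H' & S \subset B.
Proof.
move=> H'2; case: (eqVneq S set0) => [S0|Sn0].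
  by have [B [_ [HB _ _]]] := card_gt1P H'2; exists B => //; rewrite S0 sub0set.
have [s sS] := set0Pn _ Sn0.
have XW' : X :&: W' \in ind W' H.
  by apply: ind_trace HX _; apply/set0Pn; exists s; rewrite !inE (subsetP SX) ?sS ?orbT.
have [D HD XD] := red_cover XW'; exists D => //.
by apply: subset_trans XD; rewrite subsetI SX subsetUr.
Qed.

Section Lift.
Variable B : {set T}.
Hypotheses (HB : B \in H') (SB : S \subset B).

Lemma component_trace X'' : X'' \in H' -> X'' != B ->
  exists G g, [/\ G \in H, g \in G, g \in C & X'' = G].
Proof.
move=> HX'' X''B; case/red_ind_elem: (HX'') => _ [G HG eX''].
have [v vX'' vC] : exists2 v, v \in X'' & v \in C.
  apply/exists_inP; apply: contraR X''B => Hn; apply/eqP.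
  apply: red_anti HX'' HB (subset_trans _ SB); apply/subsetP => u uX''.
  have : u \in W' by rewrite eX'' inE in uX''; case/andP: uX''.
  rewrite inE => /orP[uC|//]; case/negP: Hn; apply/exists_inP; by exists u.
have vG : v \in G by move: vX''; rewrite eX'' inE => /andP[].
exists G, v; split => //.
by rewrite eX'' (setIidPl (component_edge Hsub HG vG vC)).
Qed.

Lemma component_ear_lift G g : G \in H -> g \in G -> g \in C ->
  G \in H' -> G != B -> ear H' G -> ear H G.
Proof.
move=> HG gG gC HG' GB [_ [Z' [HZ' Z'G HE']]]; split => //.
have GW' := component_edge Hsub HG gG gC.
case/red_ind_elem: (HZ') => _ [G3 HG3 eZ'].
have Z'G3 : Z' \subset G3 by rewrite eZ' subsetIl.
exists G3; split => //.
  by apply: contraNneq Z'G => e; rewrite eZ' e (setIidPl GW').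
move=> Z HZ ZG; apply/subsetP => u; rewrite inE => /andP[uG uZ].
have uW' : u \in W' by apply: (subsetP GW').
have Zi : Z :&: W' \in ind W' H.
  by apply: ind_trace HZ _; apply/set0Pn; exists u; rewrite inE uZ uW'.
have [D HD ZD] := red_cover Zi.
have uD : u \in D by apply: (subsetP ZD); rewrite inE uZ uW'.
case: (eqVneq D G) => [eDG|DG]; last first.
  by apply: (subsetP Z'G3); apply: (subsetP (HE' _ HD DG)); rewrite inE uG uD.
subst D; have uS : u \in S.
  move: uW'; rewrite inE => /orP[uC|//].
  have ZsubG : Z \subset G.
    by apply: subset_trans ZD; rewrite (setIidPl (component_edge Hsub HZ uZ uC)).
  by move: ZG; rewrite (Hanti HZ HG ZsubG) eqxx.
have BG : B != G by rewrite eq_sym.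
by apply: (subsetP Z'G3); apply: (subsetP (HE' _ HB BG)); rewrite inE uG (subsetP SB).
Qed.

End Lift.

Lemma component_ear : (1 < #|H'| -> ears_avoid H') ->
  exists G g, [/\ G \in H, g \in G, g \in C & ear H G].
Proof.
move=> IH; case: (leqP #|H'| 1) => H'2; first exact: component_ear_single.
have [B HB SB] := separator_edge H'2.
have [X'' [HX'' X''B earX'']] := IH H'2 _ HB.
have [G [g [HG gG gC eX'']]] := component_trace HB SB HX'' X''B; subst X''.
by exists G, g; split => //; exact: (component_ear_lift HB SB HG gG gC HX'' X''B earX'').
Qed.

End ComponentEar.

(* an acyclic hypergraph with two hyperedges has a separating subset of the
   intersection of two hyperedges: an articulation set, or the empty set if
   it is disconnected *)
Lemma separator_exists V E0 W : acyclic_reduced V E0 -> W \subset V ->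
  1 < #|red (ind W E0)| ->
  exists S X Y, [/\ X \in red (ind W E0), Y \in red (ind W E0), X != Y,
    S \subset X :&: Y & 1 < ncomp (W :\: S) (red (ind (W :\: S) (red (ind W E0))))].
Proof.
move=> Hac HWV Hcard; set H := red (ind W E0).
case: (boolP (hconnected W H)) => Hc.
  have /existsP [X /existsP [Y /and5P[HX HY XY _ Hlt]]] := Hac W HWV Hc Hcard.
  by exists (X :&: Y), X, Y; split => //; move: Hlt; rewrite (eqP Hc).
have [X [Y [HX HY XY]]] := card_gt1P Hcard.
have HH : red (ind W H) = H by rewrite red_ind_comp.
exists set0, X, Y; split => //; first exact: sub0set.
rewrite setD0 HH ltn_neqAle eq_sym Hc card_gt0 /=.
have [x xX] := set0Pn _ (red_ind_elem HX).1.
apply/set0Pn; exists [set y in W | connect (adj H) x y]; apply/imsetP; exists x => //.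
exact: subsetP (red_ind_sub HX) _ xX.
Qed.

Lemma acyclic_ears_avoid V E0 : acyclic_reduced V E0 ->
  forall n W, #|W| <= n -> W \subset V ->
  (forall w, w \in W -> exists2 G, G \in red (ind W E0) & w \in G) ->
  1 < #|red (ind W E0)| -> ears_avoid (red (ind W E0)).
Proof.
move=> Hac; elim=> [|n IH] W HWn HWV Hcov Hcard A HA.
  have [Z [_ [HZ _ _]]] := card_gt1P Hcard.
  have [z zZ] := set0Pn _ (red_ind_elem HZ).1.
  have zW := subsetP (red_ind_sub HZ) _ zZ.
  by move: HWn; rewrite leqn0 => /eqP/cards0_eq W0; rewrite W0 inE in zW.
set H := red (ind W E0).
have Hsub : forall G, G \in H -> G \subset W by move=> G /red_ind_sub.
have [S [X [Y [HX HY XY /subsetIP[SX SY] Hsep]]]] := separator_exists Hac HWV Hcard.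
have [c [d [Hc Hd dC AC]]] := component_avoid Hsub HA Hsep.
have SW : S \subset W := subset_trans SX (Hsub _ HX).
have W'W := component_proper SW Hd dC.
set W' := component W S H c :|: S in W'W.
have eH' : red (ind W' E0) = red (ind W' H) by rewrite red_ind_comp // proper_sub.
have IH' : 1 < #|red (ind W' H)| -> ears_avoid (red (ind W' H)).
  rewrite -eH' => H'2; apply: IH H'2.
  - by rewrite -ltnS (leq_trans (proper_card W'W)).
  - exact: subset_trans (proper_sub W'W) HWV.
  - by rewrite eH'; apply: (component_cover _ Hcov HX SX).
have [G [g [HG gG gC earG]]] :=
  component_ear (@red_anti _) Hsub Hcov HX HY XY SX SY Hc IH'.
exists G; split => //; apply: contraTneq gC => eGA; subst G.
by rewrite (disjointFr AC gG).
Qed.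

Lemma acyclic_sub V W0 M :
  acyclic_reduced V M -> W0 \subset V -> acyclic_reduced W0 (red (ind W0 M)).
Proof.
move=> Hac sW0 W sW; rewrite red_ind_comp //; apply: Hac.
exact: subset_trans sW sW0.
Qed.

Lemma remove_ear M X : antichain M -> nonempty_edges M -> ear M X ->
  red (ind (\bigcup_(G in M :\ X) G) M) = M :\ X.
Proof.
move=> HA HN [_ [Y [HY YX HE]]]; set W0 := \bigcup_(G in M :\ X) G.
have sub0 G : G \in M :\ X -> G \subset W0 by move=> HG; apply: bigcup_sup.
rewrite -[RHS]red_id; last exact: antichainD1.
apply: red_eq.
- apply/subsetP => G HG; rewrite -(setIidPl (sub0 _ HG)).
  apply: ind_trace; first by case/setD1P: HG.
  by rewrite (setIidPl (sub0 _ HG)) (nonempty_edgesD1 HN HG).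
- move=> Z /in_ind [_ [G HG eZ]]; subst Z.
  case: (eqVneq G X) => [eGX|GX]; last first.
    by exists G; [rewrite !inE GX | rewrite subsetIl].
  subst G; exists Y; first by rewrite !inE YX.
  apply/subsetP => v; rewrite inE => /andP[vX /bigcupP [G' /setD1P[G'X HG'] vG']].
  by apply: (subsetP (HE _ HG' G'X)); rewrite inE vX vG'.
Qed.

Lemma acyclic_ear_reducible n M V :
  #|M| <= n -> antichain M -> nonempty_edges M ->
  (forall G, G \in M -> G \subset V) -> acyclic_reduced V M -> ear_reducible M.
Proof.
elim: n M V => [|n IH] M V Hn HA HN HV Hac.
  by move: Hn; rewrite leqn0 => /eqP/cards0_eq ->; exact: ear_reducible0.
case: (leqP #|M| 1) => H1.
  case: (posnP #|M|) => [/cards0_eq ->|Hp]; first exact: ear_reducible0.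
  have /cards1P [X ->] : #|M| == 1 by rewrite eqn_leq H1 Hp.
  exact: ear_reducible1.
set W := \bigcup_(G in M) G.
have eM : red (ind W M) = M.
  by rewrite ind_id ?red_id // => G HG; apply: bigcup_sup.
have [A [_ [HA' _ _]]] := card_gt1P H1.
have Hcov w : w \in W -> exists2 G, G \in red (ind W M) & w \in G.
  by rewrite eM => /bigcupP [G HG wG]; exists G.
have HWV : W \subset V by apply/bigcupsP.
have HA'' : A \in red (ind W M) by rewrite eM.
have H1' : 1 < #|red (ind W M)| by rewrite eM.
have [X [HX _ earX]] := acyclic_ears_avoid Hac (leqnn #|W|) HWV Hcov H1' HA''.
rewrite eM in HX earX.
set W0 := \bigcup_(G in M :\ X) G.
have Hac' : acyclic_reduced W0 (M :\ X).
  rewrite -(remove_ear HA HN earX); apply: acyclic_sub Hac _.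
  by apply/bigcupsP => G /setD1P[_ HG]; apply: HV.
apply: (ear_reducibleS earX).
apply: (IH _ W0 _ (antichainD1 HA) (nonempty_edgesD1 HN) _ Hac').
- by move: Hn; rewrite (cardsD1 X) HX.
- by move=> G HG; apply: bigcup_sup.
Qed.

End Hypergraphs.

Theorem corollary2 (T : finType) (V : {set T}) (E : {set {set T}}) :
  hypergraph V E -> (acyclic V E <-> vorobev_regular E).
Proof.
move=> /forallP Hh.
have HA : antichain (red E) := @red_anti _ E.
have HN : nonempty_edges (red E).
  by move=> X /red_subE HX; case/andP: (implyP (Hh X) HX).
have HV G : G \in red E -> G \subset V.
  by move=> /red_subE HG; case/andP: (implyP (Hh G) HG).
rewrite /acyclic /vorobev_regular -down_red; split => [Hac|[s /andP[/andP[Hp _] Hl]]].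
- exact: ear_reducible_regular HA HN (acyclic_ear_reducible (leqnn _) HA HN HV Hac).
- exact: ear_reducible_acyclic (regular_ear_reducible HA HN Hp Hl).
Qed.
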